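(* Let $x\in W_n$ and $1\le k\le n-1$. Then $\ell(xs_k)>\ell(x)$ if and only if $\ell(txs_k)>\ell(tx)$.
   Context: $W_n$ is the Weyl group of type $B_n$ with Coxeter generators $t,s_1,\dots,s_{n-1}$ ($(ts_1)^4=1$, $(s_is_{i+1})^3=1$, other distinct pairs commute), and $\ell$ is its length function. *)

From mathcomp Require Import all_boot all_fingroup.
Set Implicit Arguments. Unset Strict Implicit. Unset Printing Implicit Defensive.

(* The Weyl group W_n of type B_n, realised as the group of signed
   permutations of {1..n}.  A point (i, e) : 'I_n * bool stands for the
   signed letter +(i+1) (e = false) or -(i+1) (e = true). *)
Definition pt (n : nat) := ('I_n * bool)%type.

Local Open Scope group_scope.

Definition negp n (a : 'I_n) : {perm pt n} := tperm (a, false) (a, true).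
Definition swapp n (a b : 'I_n) : {perm pt n} :=
  tperm (a, false) (b, false) * tperm (a, true) (b, true).

Definition tgen (n : nat) : {perm pt n} :=
  match @insub nat (fun i => i < n) 'I_n 0 with
  | Some a => negp a
  | None => 1
  end.

(* Coxeter generator s_k (1 <= k <= n-1) : swaps letters k and k+1,
   i.e. ordinals k-1 and k; identity outside the meaningful range. *)
Definition sgen (n k : nat) : {perm pt n} :=
  match @insub nat (fun i => i < n) 'I_n k.-1, @insub nat (fun i => i < n) 'I_n k with
  | Some a, Some b => if 0 < k then swapp a b else 1
  | _, _ => 1
  end.

Definition gen (n : nat) (i : 'I_n) : {perm pt n} :=
  if val i == 0 then tgen n else sgen n i.

Definition W (n : nat) : {set {perm pt n}} := <<[set gen i | i : 'I_n]>>.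

Definition word_of_length (n m : nat) (x : {perm pt n}) : bool :=
  [exists w : m.-tuple 'I_n, (\prod_(i <- w) gen i == x)].

(* Every x in W n has such a word of length < #|W n| <= #|{perm pt n}|,
   so the search range below is large enough (elements outside W n get
   a meaningless value, irrelevant here). *)
Definition ell (n : nat) (x : {perm pt n}) : nat :=
  find (fun m => word_of_length m x) (iota 0 #|{perm pt n}|.+1).

(* Order the signed letters -n < ... < -1 < 1 < ... < n.  For a signed
   permutation x, the number len2 x of inversions of x on these 2n letters
   plus the number of negative letters that x makes positive changes by
   exactly 2 under right multiplication by a generator: it goes up iff x^-1
   keeps the two letters exchanged by the generator in order.  Since only the
   identity has no such descent, len2 = 2 ell, and so ell (x s_k) > ell x iff
   x^-1 (k) < x^-1 (k+1).  Passing from x to t x applies t to the values of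
   x^-1, i.e. swaps the adjacent letters -1 and 1; as they are opposite letters
   while x^-1 (k) and x^-1 (k+1) are not, the comparison is unaffected. *)

From mathcomp Require Import all_boot all_fingroup zify.

Set Implicit Arguments. Unset Strict Implicit. Unset Printing Implicit Defensive.

Definition swapn (u i : nat) : nat :=
  if i == u then u.+1 else if i == u.+1 then u else i.

Lemma swapn_inj u : injective (swapn u).
Proof. by move=> i j; rewrite /swapn; repeat case: ifP; lia. Qed.

Lemma ltn_swapn u i j : (i, j) != (u, u.+1) -> (i, j) != (u.+1, u) ->
  (swapn u i < swapn u j) = (i < j).
Proof.
rewrite /swapn -!pair_eqE /=.
by repeat case: ifP; lia.
Qed.

Lemma increasing_squeeze (f : nat -> nat) c m :
  (forall i, i < m -> f i < f i.+1) -> c <= f 0 -> f m <= c + m ->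
  forall i, i <= m -> f i = c + i.
Proof.
move=> incr f0 fm.
have lower i : i <= m -> c + i <= f i.
  elim: i => [|i IH] im; first by rewrite addn0.
  by rewrite addnS; apply: leq_ltn_trans (IH (ltnW im)) (incr i im).
have upper j : j <= m -> f (m - j) + j <= f m.
  elim: j => [|j IH] jm; first by rewrite subn0 addn0.
  have step := incr (m - j.+1) ltac:(lia); rewrite subnSK // in step.
  by have := IH (ltnW jm); lia.
move=> i im; apply/eqP; rewrite eqn_leq lower // andbT.
by have := upper (m - i) (leq_subr _ _); rewrite subKn //; lia.
Qed.

Lemma find_iota_le (P : pred nat) N w : P w -> w <= N ->
  find P (iota 0 N.+1) <= w /\ P (find P (iota 0 N.+1)).
Proof.
move=> Pw wN; have hasP : has P (iota 0 N.+1) by apply/hasP; exists w; rewrite // mem_iota.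
have lt_find : find P (iota 0 N.+1) < N.+1 by move: hasP; rewrite has_find size_iota.
split; last by have := nth_find 0 hasP; rewrite nth_iota.
rewrite leqNgt; apply/negP => lt_w; have := before_find 0 lt_w.
by rewrite nth_iota ?Pw //; lia.
Qed.

Lemma sq_add_le_double_fact m : 2 < m -> m * m + m <= 2 * m`!.
Proof.
elim: m => [|m IH] //; case: (ltnP m 3) => [m_lt3 m_gt1|m_ge3 _].
  by have -> : m = 2 by lia.
by have := IH m_ge3; rewrite factS; nia.
Qed.

Lemma tperm_if (T : finType) (x y z : T) :
  tperm x y z = if z == x then y else if z == y then x else z.
Proof. by case: tpermP => [->|->|/eqP/negbTE-> /eqP/negbTE->]; rewrite ?eqxx //; case: eqP. Qed.

Section SignedLetters.
Variable n : nat.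
Implicit Types (p q : pt n).

(* Position of a letter in the order -n < ... < -1 < 1 < ... < n, counted
   from 0; opp_pt is then the reflection k |-> 2n - 1 - k (key_opp). *)
Definition key p : nat := if p.2 then n - p.1.+1 else n + p.1.

Definition opp_pt p : pt n := (p.1, ~~ p.2).

Lemma key_lt p : key p < n + n.
Proof. by case: p => [[i lt_in] []]; rewrite /key /=; lia. Qed.

Lemma key_inj : injective key.
Proof.
move=> [[i hi] e] [[j hj] f]; rewrite /key /=.
by case: e; case: f => /= h; try lia; congr pair; apply: val_inj => /=; lia.
Qed.

Lemma key_opp p : key (opp_pt p) = n + n - (key p).+1.
Proof. by case: p => [[i hi] []]; rewrite /key /=; lia. Qed.

Lemma key_sum_opp p q : key p + key q = (n + n).-1 -> q = opp_pt p.
Proof. by move=> sum_pq; apply: key_inj; rewrite key_opp; have := key_lt p; lia. Qed.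

Lemma negpE (a : 'I_n) p : negp a p = if p.1 == a then opp_pt p else p.
Proof.
rewrite /negp !tperm_if; case: p => [i e]; rewrite -!pair_eqE /=.
by case: (eqVneq i a) => [->|]; case: e.
Qed.

Lemma swappE (a b : 'I_n) p : a != b ->
  swapp a b p = if p.1 == a then (b, p.2) else if p.1 == b then (a, p.2) else p.
Proof.
move=> ab; have ba : b != a by rewrite eq_sym.
rewrite /swapp permM !tperm_if; case: p => [i e]; rewrite -!pair_eqE /=.
case: (eqVneq i a) => [->|ia]; last case: (eqVneq i b) => [->|ib];
  by case: e; do 2 rewrite /= ?eqxx ?(negbTE ab) ?(negbTE ba) ?(negbTE ia) ?(negbTE ib) ?andbF.
Qed.

Lemma opp_negp (a : 'I_n) p : negp a (opp_pt p) = opp_pt (negp a p).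
Proof. by rewrite !negpE /=; case: ifP. Qed.

Lemma opp_swapp (a b : 'I_n) p : a != b -> swapp a b (opp_pt p) = opp_pt (swapp a b p).
Proof. by move=> ab; rewrite !swappE //=; repeat case: ifP. Qed.

Lemma sign_swapp (a b : 'I_n) p : a != b -> (swapp a b p).2 = p.2.
Proof. by move=> ab; rewrite swappE //; repeat case: ifP. Qed.

Lemma swappK (a b : 'I_n) : a != b -> (swapp a b * swapp a b = 1)%g.
Proof.
move=> ab; apply/permP => -[i e]; rewrite permM perm1 !swappE //=.
case: (eqVneq i a) => [->|ia] /=; first by rewrite eq_sym (negbTE ab) eqxx.
by case: (eqVneq i b) => [->|ib] /=; rewrite ?eqxx // (negbTE ia) (negbTE ib).
Qed.

Lemma key_negp (o : 'I_n) p : val o = 0 -> key (negp o p) = swapn n.-1 (key p).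
Proof.
move=> o0; rewrite negpE; case: p => [[i hi] e] /=.
have -> : (Ordinal hi == o) = (i == 0) by rewrite -val_eqE /= o0.
by case: ifP => /eqP; case: e; rewrite /key /swapn /=; repeat case: ifP; lia.
Qed.

Lemma key_swapp (a b : 'I_n) p : val b = (val a).+1 ->
  key (swapp a b p) = swapn (n + a) (swapn (n - b.+1) (key p)).
Proof.
move=> ba; have ab : a != b by rewrite -val_eqE ba ltn_eqF.
rewrite swappE //; case: p => [[i hi] e] /=; rewrite -!val_eqE /=.
move: ba (ltn_ord b) => /= ba bn.
by case: eqP => [ia|nia]; [|case: eqP => [ib|nib]];
  case: e; rewrite /key /swapn /=; repeat case: ifP; lia.
Qed.

End SignedLetters.

Section Generators.
Variable n : nat.
Local Open Scope group_scope.
Implicit Types (p : pt n) (x : {perm pt n}).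

Definition hyperoctahedral : {set {perm pt n}} :=
  [set x : {perm pt n} | [forall p, x (opp_pt p) == opp_pt (x p)]].

Lemma hyperoctahedralP x :
  reflect (forall p, x (opp_pt p) = opp_pt (x p)) (x \in hyperoctahedral).
Proof. by rewrite inE; apply: (iffP forallP) => h p; apply/eqP. Qed.

Lemma group_set_hyperoctahedral : group_set hyperoctahedral.
Proof.
apply/group_setP; split; first by apply/hyperoctahedralP => p; rewrite !perm1.
move=> x y /hyperoctahedralP hx /hyperoctahedralP hy; apply/hyperoctahedralP => p.
by rewrite !permM hx hy.
Qed.

Canonical hyperoctahedral_group := Group group_set_hyperoctahedral.

Definition prev_ord (i : 'I_n) : 'I_n := Ordinal (leq_ltn_trans (leq_pred i) (ltn_ord i)).

Lemma prev_ord_neq (i : 'I_n) : val i != 0 -> prev_ord i != i.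
Proof. by case: i => [[|i] hi]; rewrite -val_eqE /= ?ltn_eqF. Qed.

Lemma genE (i : 'I_n) : gen i = if val i == 0 then negp i else swapp (prev_ord i) i.
Proof.
rewrite /gen /tgen /sgen; case: ifP => [/eqP i0|/negbT i0].
  by case: insubP => [a _ a0|]; [congr negp; apply: val_inj; rewrite a0 i0 | rewrite -i0 ltn_ord].
case: insubP => [a _ a_pred|]; last by rewrite (leq_ltn_trans (leq_pred i)).
case: insubP => [b _ b_i|]; last by rewrite ltn_ord.
by rewrite lt0n i0; congr swapp; apply: val_inj.
Qed.

Lemma gen_hyperoctahedral (i : 'I_n) : gen i \in hyperoctahedral.
Proof.
apply/hyperoctahedralP => p; rewrite genE; case: ifP => i0.
  exact: opp_negp.
exact/opp_swapp/prev_ord_neq/negbT.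
Qed.

Lemma genK (i : 'I_n) : gen i * gen i = 1.
Proof. by rewrite genE; case: ifP => i0; [apply: tperm2 | apply/swappK/prev_ord_neq/negbT]. Qed.

Lemma gen_W (i : 'I_n) : gen i \in W n.
Proof. exact/mem_gen/imset_f. Qed.

Lemma W_sub_hyperoctahedral : W n \subset hyperoctahedral.
Proof. by rewrite gen_subG; apply/subsetP => _ /imsetP[i _ ->]; apply: gen_hyperoctahedral. Qed.

End Generators.

Section Inversions.
Variable n : nat.
Implicit Types (p q : pt n).

Definition inversions (f : pt n -> nat) : {set pt n * pt n} :=
  [set pq | (key pq.1 < key pq.2) && (f pq.2 < f pq.1)].

Lemma card_inversions_swapn (f g : pt n -> nat) u c d :
  injective f -> (forall p, g p = swapn u (f p)) ->
  f c = u -> f d = u.+1 -> key c < key d ->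
  #|inversions g| = #|inversions f|.+1.
Proof.
move=> f_inj gE fc fd cd.
have cd_notin : (c, d) \notin inversions f by rewrite inE /= fc fd (ltnNge u.+1) leqnSn andbF.
suff -> : inversions g = (c, d) |: inversions f by rewrite cardsU1 cd_notin.
apply/setP => -[p q]; rewrite in_setU1 !inE /= !gE.
case: (eqVneq (f q, f p) (u.+1, u)) => [[fq fp]|ne1].
  have pc : p = c by apply: f_inj; rewrite fc.
  have qd : q = d by apply: f_inj; rewrite fd.
  by rewrite pc qd cd fc fd /swapn !eqxx (gtn_eqF (ltnSn u)) /= ltnSn.
case: (eqVneq (f q, f p) (u, u.+1)) => [[fq fp]|ne2].
  have pd : p = d by apply: f_inj; rewrite fd.
  have qc : q = c by apply: f_inj; rewrite fc.
  have dc : (key d < key c) = false by rewrite ltnNge ltnW.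
  have ndc : (d == c) = false by apply/eqP => dc'; move: cd; rewrite dc' ltnn.
  by rewrite pd qc dc -pair_eqE /= ndc.
rewrite ltn_swapn //; case: eqP => // -[pc qd].
by move: ne1; rewrite pc qd fc fd eqxx.
Qed.

End Inversions.

Section DoubledLength.
Variable n : nat.
Local Open Scope group_scope.
Implicit Types (p : pt n) (x : {perm pt n}).

Definition neg_flips x : {set pt n} := [set p | p.2 && ~~ (x p).2].

Definition len2 x : nat := #|inversions (fun p => key (x p))| + #|neg_flips x|.

Lemma key_perm_inj x : injective (fun p => key (x p)).
Proof. by move=> p q /key_inj /perm_inj. Qed.

Lemma len2_mul_swapp x (a b : 'I_n) :
  x \in hyperoctahedral n -> val b = (val a).+1 ->
  key (x^-1 (a, false)) < key (x^-1 (b, false)) -> len2 (x * swapp a b) = (len2 x).+2.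
Proof.
move=> /groupVr /hyperoctahedralP xV ba asc.
have ab : a != b by rewrite -val_eqE ba ltn_eqF.
move: ba (ltn_ord b) => /= ba bn.
pose h p := swapn (n - b.+1) (key (x p)).
have inv_h : #|inversions h| = #|inversions (fun p => key (x p))|.+1.
  apply: (card_inversions_swapn (u := n - b.+1) (c := x^-1 (b, true)) (d := x^-1 (a, true))) => //.
  - exact: key_perm_inj.
  - by rewrite permKV.
  - by rewrite permKV /key /=; lia.
  rewrite -[(b, true)]/(opp_pt (b, false)) -[(a, true)]/(opp_pt (a, false)) !xV !key_opp.
  by apply: ltn_sub2l; rewrite ?ltnS //; apply: leq_ltn_trans asc (key_lt _).
have inv_xs : #|inversions (fun p => key ((x * swapp a b) p))| = #|inversions h|.+1.
  apply: (card_inversions_swapn (u := n + a) (c := x^-1 (a, false)) (d := x^-1 (b, false))) => //.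
  - by move=> p q /swapn_inj /key_perm_inj.
  - by move=> p; rewrite permM (key_swapp _ ba).
  - by rewrite /h permKV /key /swapn /=; repeat case: ifP; lia.
  - by rewrite /h permKV /key /swapn /=; repeat case: ifP; lia.
have flips : neg_flips (x * swapp a b) = neg_flips x.
  by apply/setP => p; rewrite !inE permM sign_swapp.
by rewrite /len2 inv_xs inv_h flips.
Qed.

Lemma len2_mul_negp x (o : 'I_n) :
  x \in hyperoctahedral n -> val o = 0 ->
  ~~ (x^-1 (o, false)).2 -> len2 (x * negp o) = (len2 x).+2.
Proof.
move=> /groupVr /hyperoctahedralP xV o0 d_pos; set d := x^-1 (o, false) in d_pos *.
have xd_opp : x^-1 (o, true) = opp_pt d by rewrite -xV.
have n_gt0 := ltn_ord o; rewrite o0 in n_gt0.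
have inv_xt : #|inversions (fun p => key ((x * negp o) p))| =
              #|inversions (fun p => key (x p))|.+1.
  apply: (card_inversions_swapn (u := n.-1) (c := opp_pt d) (d := d)).
  - exact: key_perm_inj.
  - by move=> p; rewrite permM key_negp.
  - by rewrite -xd_opp permKV /key /= o0; lia.
  - by rewrite permKV /key /= o0; lia.
  - by rewrite /key /opp_pt /=; move: d_pos; case: (d) => [[i hi] []] //= _; lia.
have flips : neg_flips (x * negp o) = opp_pt d |: neg_flips x.
  apply/setP => p; rewrite in_setU1 !inE permM negpE.
  case: (eqVneq p (opp_pt d)) => [->|p_ne] /=.
    by rewrite -xd_opp permKV eqxx /= andbT.
  case: eqP => [xpo|//].
  have xpE : x p = (o, (x p).2) by rewrite -xpo; case: (x p).
  case: (x p).2 xpE => xpE.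
    by case/eqP: p_ne; rewrite -xd_opp -xpE permK.
  have pd : p = d by rewrite /d -xpE permK.
  by rewrite xpE pd /= (negbTE d_pos).
have opp_d_notin : opp_pt d \notin neg_flips x by rewrite inE -xd_opp permKV andbF.
by rewrite /len2 inv_xt flips cardsU1 opp_d_notin addSn addnS.
Qed.

Lemma len2_1 : len2 1 = 0.
Proof.
have no_inversions : inversions (fun p => key ((1 : {perm pt n}) p)) = set0.
  by apply/setP => -[p q]; rewrite !inE !perm1 /=; case: ltngtP.
have no_flips : neg_flips 1 = set0 by apply/setP => p; rewrite !inE perm1 andbN.
by rewrite /len2 no_inversions no_flips !cards0.
Qed.

Lemma val_prev_ord (i : 'I_n) : val i != 0 -> val i = (val (prev_ord i)).+1.
Proof. by case: i => [[|i] hi]. Qed.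

(* Whether x^-1 keeps in order the two letters exchanged by gen i. *)
Definition ascent x (i : 'I_n) : bool :=
  if val i == 0 then ~~ (x^-1 (i, false)).2
  else key (x^-1 (prev_ord i, false)) < key (x^-1 (i, false)).

Lemma len2_mul_gen x i :
  x \in hyperoctahedral n -> ascent x i -> len2 (x * gen i) = (len2 x).+2.
Proof.
rewrite /ascent genE; case: ifP => [/eqP i0|/negbT i0] xH asc.
  exact: len2_mul_negp.
by apply: len2_mul_swapp => //; apply: val_prev_ord.
Qed.

Lemma ascent_mul_gen x i :
  x \in hyperoctahedral n -> ascent (x * gen i) i = ~~ ascent x i.
Proof.
move=> /groupVr /hyperoctahedralP xV.
have gV : (gen i)^-1 = gen i by apply/eqP; rewrite eq_invg_mul genK.
rewrite /ascent invMg gV !permM genE; case i0: (val i == 0).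
  by rewrite !negpE /= eqxx xV.
have ne := prev_ord_neq (negbT i0).
rewrite !swappE //= !eqxx eq_sym (negbTE ne) -leqNgt [in RHS]leq_eqVlt.
by rewrite (inj_eq (@key_inj _)) (inj_eq (@perm_inj _ _)) -pair_eqE /= eq_sym (negbTE ne).
Qed.

Lemma ascent_tgen_mul x i : 0 < n -> x \in hyperoctahedral n -> val i != 0 ->
  ascent (tgen n * x) i = ascent x i.
Proof.
move=> n_gt0 /groupVr /hyperoctahedralP xV i0; pose o := Ordinal n_gt0.
have tE : tgen n = negp o by have := genE o; rewrite /gen.
rewrite /ascent (negbTE i0) tE invMg tpermV -/(negp o) !permM !key_negp //.
set c := x^-1 (prev_ord i, false); set d := x^-1 (i, false).
have d_ne : d != opp_pt c by rewrite -xV (inj_eq (@perm_inj _ _)) -pair_eqE /= andbF.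
have sum_ne : key c + key d != (n + n).-1 by apply: contra d_ne => /eqP /key_sum_opp ->.
by rewrite ltn_swapn //; apply: contra sum_ne; rewrite -pair_eqE /= => /andP[/eqP-> /eqP->];
  apply/eqP; lia.
Qed.

Lemma len2_mul_gen_descent x i :
  x \in hyperoctahedral n -> ~~ ascent x i -> (len2 (x * gen i)).+2 = len2 x.
Proof.
move=> xH desc; have xgH : x * gen i \in hyperoctahedral n.
  by rewrite groupM ?gen_hyperoctahedral.
by rewrite -(@len2_mul_gen _ i xgH) ?ascent_mul_gen // -mulgA genK mulg1.
Qed.

Lemma ascent_free_eq1 x :
  x \in hyperoctahedral n -> (forall i, ascent x i) -> x = 1.
Proof.
move=> xH asc; apply: invg_inj; rewrite invg1.
have /hyperoctahedralP yH := groupVr xH; rewrite /ascent in asc.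
have [n0|n_gt0] := posnP n.
  by apply/permP => -[[i hi] e]; exfalso; move: hi; rewrite n0.
pose o := Ordinal n_gt0.
have val_o i : i < n -> val (insubd o i) = i by move=> lt_in; rewrite val_insubd lt_in.
pose h i := key (x^-1 (insubd o i, false)).
(* The keys of x^-1 (1), ..., x^-1 (n) increase strictly within [n, 2n). *)
have hE : forall i, i <= n.-1 -> h i = n + i.
  apply: increasing_squeeze.
  - move=> i lt_i.
    have prev_i : prev_ord (insubd o i.+1) = insubd o i.
      by apply: val_inj; rewrite /= !val_o //; lia.
    by have := asc (insubd o i.+1); rewrite val_o /= ?prev_i //; lia.
  - have := asc o; rewrite /h (_ : insubd o 0 = o); last by apply: val_inj; rewrite val_o.
    by rewrite /= /key; case: (x^-1 _).2 => // _; apply: leq_addr.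
  - by rewrite /h; have := key_lt (x^-1 (insubd o n.-1, false)); lia.
have fix_pos (i : 'I_n) : x^-1 (i, false) = (i, false).
  apply: key_inj; rewrite [RHS]/key /= -hE; last by have := ltn_ord i; lia.
  by rewrite /h (_ : insubd o i = i) //; apply: val_inj; rewrite val_o.
apply/permP => -[i []]; rewrite perm1 //.
by rewrite -[(i, true)]/(opp_pt (i, false)) yH fix_pos.
Qed.

End DoubledLength.

Section CoxeterLength.
Variable n : nat.
Local Open Scope group_scope.
Implicit Types (x : {perm pt n}).

Lemma prod_gen_rcons (s : seq 'I_n) i :
  \prod_(j <- rcons s i) gen j = \prod_(j <- s) gen j * gen i.
Proof. by rewrite -cats1 big_cat big_seq1. Qed.

Lemma len2_mul_gen_le x i :
  x \in hyperoctahedral n -> len2 (x * gen i) <= (len2 x).+2.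
Proof.
move=> xH; case: (boolP (ascent x i)) => [asc|desc].
  by rewrite len2_mul_gen.
by rewrite -(len2_mul_gen_descent xH desc) !leqW.
Qed.

Lemma len2_prod_gen (s : seq 'I_n) : len2 (\prod_(i <- s) gen i) <= 2 * size s.
Proof.
elim/last_ind: s => [|s i IH]; first by rewrite big_nil len2_1.
rewrite prod_gen_rcons size_rcons (leq_trans (len2_mul_gen_le _ _)) //.
  by apply: group_prod => j _; apply: gen_hyperoctahedral.
by rewrite mulnS add2n !ltnS.
Qed.

Lemma reduced_word_exists x : x \in W n ->
  exists s : seq 'I_n, \prod_(i <- s) gen i = x /\ (2 * size s)%N = len2 x.
Proof.
have [N] := ubnP (len2 x); elim: N x => // N IH x lt_N xW.
have [-> | x_ne1] := eqVneq x 1; first by exists [::]; rewrite big_nil len2_1.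
have xH := subsetP (W_sub_hyperoctahedral n) x xW.
have [i desc] : exists i, ~~ ascent x i.
  case: (pickP (fun i => ~~ ascent x i)) => [i desc | all_asc]; first by exists i.
  by case/eqP: x_ne1; apply: ascent_free_eq1 => // i; apply/negbFE/all_asc.
have len_x := len2_mul_gen_descent xH desc.
have [s [prod_s size_s]] := IH (x * gen i) ltac:(lia) (groupM xW (gen_W i)).
exists (rcons s i); rewrite prod_gen_rcons prod_s -mulgA genK mulg1 size_rcons.
by split=> //; lia.
Qed.

Lemma len2_bound x : len2 x <= #|{: pt n}| * #|{: pt n}| + #|{: pt n}|.
Proof. by rewrite /len2 leq_add // -?card_prod max_card. Qed.

Lemma ell_len2 x : 1 < n -> x \in W n -> (2 * ell x)%N = len2 x.
Proof.
move=> n_gt1 xW; have [s [prod_s size_s]] := reduced_word_exists xW.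
have word_s : word_of_length (size s) x.
  by apply/existsP; exists (in_tuple s); rewrite /= prod_s.
(* ell only searches lengths up to N! = #|{perm pt n}|, N = 2n; the reduced
   word has length at most (N^2 + N)/2 <= N! since N >= 4. *)
have size_le : size s <= #|{perm pt n}|.
  have card_pt : #|{: pt n}| = (2 * n)%N by rewrite card_prod card_ord card_bool mulnC.
  have fact_le : #|{: pt n}|`! <= #|{perm pt n}| by rewrite -cardsT -card_perm max_card.
  have := sq_add_le_double_fact (m := #|{: pt n}|); rewrite card_pt in fact_le *.
  by have := len2_bound x; rewrite card_pt; lia.
have [ell_le word_ell] := find_iota_le (P := fun m => word_of_length m x) word_s size_le.
rewrite -/(ell x) in ell_le word_ell; case/existsP: word_ell => t /eqP prod_t.
by have := len2_prod_gen t; rewrite size_tuple prod_t; lia.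
Qed.

Lemma ell_mul_gen x i : 1 < n -> x \in W n -> (ell x < ell (x * gen i)) = ascent x i.
Proof.
move=> n_gt1 xW; have xH := subsetP (W_sub_hyperoctahedral n) x xW.
rewrite -(ltn_pmul2l (isT : 0 < 2)) (ell_len2 n_gt1 xW).
rewrite (ell_len2 n_gt1 (groupM xW (gen_W i))).
case: (boolP (ascent x i)) => [asc|desc].
  by rewrite len2_mul_gen // ltnS leqnSn.
by rewrite -(len2_mul_gen_descent xH desc) ltnNge !leqW.
Qed.

End CoxeterLength.

Theorem proposition2p12 (n : nat) (x : {perm pt n}) (k : nat) :
  x \in W n -> 1 <= k <= n - 1 ->
  (ell (x * sgen n k)%g > ell x <-> ell (tgen n * x * sgen n k)%g > ell (tgen n * x)%g).
Proof.
move=> xW /andP[k_gt0 k_lt]; have n_gt1 : 1 < n by lia.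
have n_gt0 : 0 < n by lia.
have k_ltn : k < n by lia.
pose b := Ordinal k_ltn; have b0 : val b != 0 by rewrite -lt0n.
have sE : sgen n k = gen b by rewrite /gen (negbTE b0).
have tW : tgen n \in W n by have := gen_W (Ordinal n_gt0); rewrite /gen.
have txW := groupM tW xW.
rewrite sE !ell_mul_gen // ascent_tgen_mul //.
exact: subsetP (W_sub_hyperoctahedral n) x xW.
Qed.
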